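(* Let $\alpha\ge0$ and $p\ge\dfrac{9+3\alpha+\sqrt{9\alpha^2+30\alpha+33}}{4}$. Then $p>\alpha+2$ and $F_{p,\alpha}(r)\le0$ for all $r\in(0,1]$, where $$F_{p,\alpha}(r)=r^{\,p-4-\frac{3\alpha}{2}}\int_0^{\frac{2r}{1+r}}\frac{t^{\frac{\alpha+2}{p}-1}}{(1-t)^{\frac{\alpha+2}{p}}}\,dt-\int_0^1\frac{t^{\frac{\alpha+2}{p}-1}}{(1-t)^{\frac{\alpha+2}{p}}}\,dt .$$ *)

From HB Require Import structures.
From mathcomp Require Import all_boot all_order all_algebra.
From mathcomp Require Import all_classical all_reals all_analysis.
Set Implicit Arguments. Unset Strict Implicit. Unset Printing Implicit Defensive.
Import Order.TTheory GRing.Theory Num.Theory.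
Import numFieldNormedType.Exports.
Local Open Scope classical_set_scope.
Local Open Scope ring_scope.

Definition kern {R : realType} (p alpha : R) (t : R) : R :=
  t `^ ((alpha + 2) / p - 1) / (1 - t) `^ ((alpha + 2) / p).

Definition Ikern {R : realType} (p alpha x : R) : \bar R :=
  (\int[@lebesgue_measure R]_(t in `]0%R, x[%classic) (kern p alpha t)%:E)%E.

Definition Fpa {R : realType} (p alpha r : R) : \bar R :=
  ((r `^ (p - 4 - 3 * alpha / 2))%:E * Ikern p alpha (2 * r / (1 + r))
     - Ikern p alpha 1)%E.

From HB Require Import structures.
From mathcomp Require Import all_boot all_order all_algebra.
From mathcomp Require Import all_classical all_reals all_analysis.
From mathcomp Require Import measurable_realfun.
From mathcomp Require Import ring lra.
Set Implicit Arguments. Unset Strict Implicit. Unset Printing Implicit Defensive.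
Import Order.TTheory GRing.Theory Num.Theory.
Import numFieldNormedType.Exports.
Local Open Scope classical_set_scope.
Local Open Scope ring_scope.

(* Put a = (alpha + 2) / p and q = p - 4 - 3 alpha / 2; the threshold on p is
   exactly what makes a < 1 and q >= (1 - 3 a) / 2.  For u = 2 r / (1 + r),
   bounding (1 - t)^-a by (1 - u)^-a on ]0, u[ and t^(a-1) by 1 on [u, 1[ gives
     int_0^u  <=  u^a / (a (1 - u)^a),      int_u^1  >=  (1 - u)^(1-a) / (1 - a),
   so r^q int_0^u <= int_0^1 follows from (r^q - 1) u^a / a <= (1 - u) / (1 - a).
   For 3 a > 1 this reduces, via r^q <= r^((1 - 3a)/2) and u^a <= 2 r^a / (1 + r),
   to Young's inequality (r^a)^l <= l r^a + 1 - l with l = (1 - a) / (2 a). *)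

Section power_integrals.
Context {R : realType}.
Local Notation mu := (@lebesgue_measure R).

Lemma integral_cc_derive (f F : R -> R) (x y : R) : x < y ->
  (forall t, x <= t <= y -> is_derive t 1 F (f t)) ->
  (forall t, x <= t <= y -> {for t, continuous f}) ->
  (\int[mu]_(t in `[x, y]) (f t)%:E = (F y - F x)%:E)%E.
Proof.
move=> xy dF cf.
have cF t : x <= t <= y -> {for t, continuous F}.
  by move=> /dF [] d _; exact/differentiable_continuous/derivable1_diffP.
rewrite EFinB; apply: continuous_FTC2 => //.
- apply: continuous_in_subspaceT => t; rewrite inE /= in_itv /=; exact: cf.
- split.
  + by move=> t; rewrite in_itv /= => /andP[? ?]; case: (dF t); rewrite ?ltW.
  + by apply: cvg_at_right_filter; apply: cF; rewrite lexx ltW.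
  + by apply: cvg_at_left_filter; apply: cF; rewrite lexx ltW.
- move=> t; rewrite in_itv /= => /andP[? ?].
  by case: (dF t) => [|_ <-]; [rewrite !ltW|rewrite derive1E].
Qed.

Lemma powR_continuous (e t : R) : 0 < t -> {for t, continuous (fun s : R => s `^ e)}.
Proof.
move=> t0; apply/differentiable_continuous/derivable1_diffP.
by apply: derivable_powR; rewrite in_itv /= t0.
Qed.

Lemma ge0_integral_itv_oo_split (f : R -> R) (x u y : R) : x < u -> u <= y ->
  measurable_fun `]x, y[ f -> (forall t, x < t < y -> 0 <= f t) ->
  (\int[mu]_(t in `]x, y[) (f t)%:E =
   \int[mu]_(t in `]x, u[) (f t)%:E + \int[mu]_(t in `[u, y[) (f t)%:E)%E.
Proof.
move=> xu uy mf f0.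
have xyU : `]x, y[%classic = `]x, u[%classic `|` `[u, y[%classic.
  by apply: itv_bndbnd_setU; rewrite bnd_simp.
rewrite xyU; apply: ge0_integral_setU => //.
- by rewrite -xyU; exact/measurable_EFinP.
- by move=> t /= [|]; rewrite in_itv /= => /andP[? ?]; rewrite lee_fin f0 //;
    apply/andP; split; lra.
- apply/disj_setPS => t [] /=; rewrite !in_itv /= => /andP[_ ?] /andP[? _]; lra.
Qed.

(* [a t^(a-1)] is not continuous at [0], so the integral is cut along the
   points [u / k.+1], on each piece of which the FTC applies; the pieces
   telescope. *)
Lemma ge0_integral_powR_oo_le (a u : R) : 0 < a -> 0 < u ->
  (\int[mu]_(t in `]0%R, u[) (a * t `^ (a - 1))%:E <= (u `^ a)%:E)%E.
Proof.
move=> a0 u0.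
pose P (k : nat) := `]u / k.+2%:R, u / k.+1%:R]%classic.
pose f t := (a * t `^ (a - 1))%:E.
have mf (D : set R) : measurable_fun D f.
  apply/measurable_EFinP/measurable_funM => //.
  exact: measurable_funTS (measurable_powR _).
have f0 (D : set R) t : D t -> (0 <= f t)%E.
  by move=> _; rewrite lee_fin mulr_ge0 ?powR_ge0 // ltW.
have PE k t : P k t -> Num.truncn (u / t) = k.+1.
  rewrite /P /= in_itv /= => /andP[h1 h2].
  have t0 : 0 < t by apply: lt_trans h1; apply: divr_gt0.
  apply: truncn_def; apply/andP; split.
    by rewrite ler_pdivlMr // mulrC -ler_pdivlMr.
  by rewrite ltr_pdivrMr // mulrC -ltr_pdivrMr.
have sub : `]0, u[%classic `<=` \bigcup_k P k.
  move=> t /=; rewrite in_itv /= => /andP[t0 tu].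
  have ut1 : 1 <= u / t by rewrite ler_pdivlMr // mul1r ltW.
  have /andP[h1 h2] := truncn_itv (le_trans ler01 ut1).
  have n0 : (0 < Num.truncn (u / t))%N by rewrite truncn_gt0.
  exists (Num.truncn (u / t)).-1 => //.
  rewrite /P /= in_itv /= !prednK //; apply/andP; split.
    by rewrite ltr_pdivrMr // mulrC -ltr_pdivrMr.
  by rewrite ler_pdivlMr ?ltr0n // mulrC -ler_pdivlMr.
have tP : trivIset setT P.
  by move=> i j _ _ [t [Pi Pj]]; have := PE i t Pi; rewrite (PE j t Pj) => -[].
have mP k : measurable (P k) by exact: measurable_itv.
apply: (@le_trans _ _ (\int[mu]_(t in \bigcup_k P k) f t)%E).
  apply: ge0_subset_integral => //; [|exact: mf|exact: f0].
  by apply: bigcup_measurable => k _; exact: measurable_itv.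
have mfU := mf (\bigcup_k P k).
rewrite ge0_integral_bigcup //; last exact: f0.
pose x (k : nat) := (u / k.+1%:R) `^ a.
rewrite (@eq_eseriesr _ _ (fun k => (x k - x k.+1)%:E)); last first.
  move=> k _; rewrite /P integral_itv_obnd_cbnd; last exact: mf.
  have lt12 : u / k.+2%:R < u / k.+1%:R.
    by rewrite ltr_pM2l // ltf_pV2 ?ltr_nat ?posrE ?ltr0n.
  have pos : 0 < u / k.+2%:R by apply: divr_gt0.
  apply: (@integral_cc_derive _ (fun s => s `^ a)) => // t /andP[h1 _].
    by apply: is_derive1_powR; exact: lt_le_trans h1.
  apply: continuousM; first exact: cvg_cst.
  by apply: powR_continuous; exact: lt_le_trans h1.
apply: lime_le.
  apply: is_cvg_nneseries => n _ _; rewrite lee_fin subr_ge0.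
  apply: ge0_ler_powR; rewrite ?nnegrE ?divr_ge0 ?(ltW a0) ?(ltW u0) //.
  by rewrite ler_pM2l // lef_pV2 ?ler_nat ?posrE ?ltr0n.
apply: nearW => n; rewrite sumEFin lee_fin.
have -> : \sum_(0 <= i < n) (x i - x i.+1) = x 0%N - x n.
  by rewrite -opprB -telescope_sumr // -sumrN; apply: eq_bigr => i _; rewrite opprB.
by rewrite /x divr1 lerBlDr lerDl powR_ge0.
Qed.

Lemma integral_onem_powR_cc (a x y : R) : x < y -> y < 1 ->
  (\int[mu]_(t in `[x, y]) ((1 - a) * (1 - t) `^ (- a))%:E =
   ((1 - x) `^ (1 - a) - (1 - y) `^ (1 - a))%:E)%E.
Proof.
move=> xy y1.
rewrite (_ : (1 - x) `^ (1 - a) - (1 - y) `^ (1 - a) =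
  - (1 - y) `^ (1 - a) - - (1 - x) `^ (1 - a)); last ring.
apply: (@integral_cc_derive _ (fun s => - (1 - s) `^ (1 - a))) => // t /andP[_ ty].
- have t1 : 0 < 1 - t by lra.
  have d1 : is_derive t 1 (fun s : R => 1 - s) (-1).
    by rewrite -sub0r; apply: is_deriveB.
  have := is_deriveN (is_derive1_comp (f := fun s : R => s `^ (1 - a))
    (g := fun s : R => 1 - s) (x := t) (is_derive1_powR (1 - a) t1) d1).
  by rewrite (_ : 1 - a - 1 = - a) 1?mulrN1 ?opprK //; ring.
- apply: continuousM; first exact: cvg_cst.
  apply: (@continuous_comp _ _ _ (fun s : R => 1 - s) (fun s : R => s `^ (- a))).
    by apply: continuousB; [exact: cvg_cst|exact: cvg_id].
  by apply: powR_continuous; lra.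
Qed.

Lemma integral_onem_powR_co_ge (a u : R) : a < 1 -> u < 1 ->
  (((1 - u) `^ (1 - a))%:E <=
   \int[mu]_(t in `[u, 1%R[) ((1 - a) * (1 - t) `^ (- a))%:E)%E.
Proof.
move=> a1 u1.
set J := (\int[mu]_(t in `[u, 1%R[) _)%E.
have f0 t : (0 <= ((1 - a) * (1 - t) `^ (- a))%:E)%E.
  by rewrite lee_fin mulr_ge0 ?powR_ge0 //; lra.
have J_ge y : u < y -> y < 1 ->
    (((1 - u) `^ (1 - a) - (1 - y) `^ (1 - a))%:E <= J)%E.
  move=> uy y1; rewrite -integral_onem_powR_cc //.
  apply: ge0_subset_integral => //.
  - apply/measurable_EFinP/measurable_funM => //.
    by apply: (measurableT_comp (measurable_powR _)) => //; exact: measurable_funB.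
  - by move=> t /=; rewrite !in_itv /= => /andP[-> ?] /=; lra.
have : (0 <= J)%E by exact: integral_ge0.
case: J J_ge => [j| |] // J_ge _; last exact: leey.
rewrite lee_fin; apply/ler_addgt0Pr => e e0.
(* the tail [(1 - y)^(1 - a)] drops below [e] once [1 - y <= e^(1/(1 - a))] *)
have near1 d : 0 < d -> d < 1 - u -> d <= e `^ (1 - a)^-1 ->
    (1 - u) `^ (1 - a) <= j + e.
  move=> d0 du de.
  have := J_ge (1 - d); rewrite (_ : 1 - (1 - d) = d); last ring.
  rewrite lee_fin => /(_ ltac:(lra) ltac:(lra)) jd.
  suff : d `^ (1 - a) <= e by lra.
  apply: le_trans (ge0_ler_powR _ _ _ de) _; rewrite ?nnegrE ?powR_ge0 //; try lra.
  by rewrite -powRrM mulVf ?powRr1 ?(ltW e0) // subr_eq0 gt_eqF.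
have e0' : 0 < e `^ (1 - a)^-1 by exact: powR_gt0.
have [eu|ue] := ltP (e `^ (1 - a)^-1) (1 - u).
  exact: near1 e0' eu (lexx _).
by apply: (near1 ((1 - u) / 2)); lra.
Qed.

Lemma powR_le_affine (x l : R) : 0 <= x -> 0 < l < 1 ->
  x `^ l <= l * x + (1 - l).
Proof.
move=> x0 /andP[l0 l1].
have := @conjugate_powR R (x `^ l) 1 (l^-1) ((1 - l)^-1) (powR_ge0 _ _) ler01.
rewrite invr_gt0 l0 invr_gt0 subr_gt0 l1 !invrK => /(_ isT isT).
rewrite addrC subrK => /(_ erefl).
by rewrite mulr1 -powRrM mulfV ?gt_eqF// powRr1// powR1 mul1r mulrC.
Qed.

End power_integrals.

Section incomplete_beta.
Context {R : realType}.
Local Notation mu := (@lebesgue_measure R).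

Definition beta_kernel (a t : R) : R := t `^ (a - 1) * (1 - t) `^ (- a).

Definition head_bound (a u : R) : R := (1 - u) `^ (- a) / a * u `^ a.

Definition tail_bound (a u : R) : R := (1 - u) `^ (1 - a) / (1 - a).

Lemma beta_kernel_ge0 (a t : R) : 0 <= beta_kernel a t.
Proof. by rewrite mulr_ge0 ?powR_ge0. Qed.

Lemma measurable_beta_kernel (a : R) (D : set R) :
  measurable_fun D (beta_kernel a).
Proof.
apply: measurable_funM; first exact: measurable_funTS (measurable_powR _).
apply: (measurableT_comp (measurable_powR _)) => //; exact: measurable_funB.
Qed.

Lemma Ikern_beta_kernel (p alpha x : R) :
  Ikern p alpha x =
  (\int[mu]_(t in `]0%R, x[) (beta_kernel ((alpha + 2) / p) t)%:E)%E.
Proof. by apply: eq_integral => t _; rewrite /kern /beta_kernel powRN. Qed.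

Lemma integral_beta_kernel_le_head (a u : R) : 0 < a -> 0 < u < 1 ->
  (\int[mu]_(t in `]0%R, u[) (beta_kernel a t)%:E <= (head_bound a u)%:E)%E.
Proof.
move=> a0 /andP[u0 u1].
have c0 : 0 <= (1 - u) `^ (- a) / a by rewrite divr_ge0 ?powR_ge0 ?ltW.
have mpow : measurable_fun `]0%R, u[ (fun t : R => a * t `^ (a - 1)).
  by apply: measurable_funM => //; exact: measurable_funTS (measurable_powR _).
apply: (@le_trans _ _
    (\int[mu]_(t in `]0%R, u[) (((1 - u) `^ (- a) / a)%:E * (a * t `^ (a - 1))%:E))%E).
  apply: ge0_le_integral => //.
  - by move=> t _; rewrite lee_fin beta_kernel_ge0.
  - by apply/measurable_EFinP; exact: measurable_beta_kernel.
  - by apply/measurable_EFinP; exact: measurable_funM.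
  move=> t; rewrite /= in_itv /= => /andP[t0 tu].
  have t1 : t < 1 by lra.
  rewrite -EFinM lee_fin /beta_kernel.
  rewrite (_ : (1 - u) `^ (- a) / a * (a * t `^ (a - 1)) = t `^ (a - 1) * (1 - u) `^ (- a));
    last by field; lra.
  rewrite ler_wpM2l ?powR_ge0 // !powRN lef_pV2 ?posrE ?powR_gt0 ?subr_gt0 //.
  by apply: ge0_ler_powR; rewrite ?nnegrE; lra.
rewrite ge0_integralZl_EFin //; last 2 first.
- by move=> t _; rewrite lee_fin mulr_ge0 ?powR_ge0 ?ltW.
- exact/measurable_EFinP.
rewrite /head_bound (EFinM _ (u `^ a)); apply: lee_pmul; rewrite ?lee_fin //.
  by apply: integral_ge0 => t _; rewrite lee_fin mulr_ge0 ?powR_ge0 ?ltW.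
exact: ge0_integral_powR_oo_le.
Qed.

Lemma tail_le_integral_beta_kernel (a u : R) : a < 1 -> 0 < u < 1 ->
  ((tail_bound a u)%:E <= \int[mu]_(t in `[u, 1%R[) (beta_kernel a t)%:E)%E.
Proof.
move=> a1 /andP[u0 u1].
have ca0 : 0 <= (1 - a)^-1 by rewrite invr_ge0; lra.
have mf : measurable_fun `[u, 1%R[ (fun t : R => (1 - a) * (1 - t) `^ (- a)).
  apply: measurable_funM => //.
  by apply: (measurableT_comp (measurable_powR _)) => //; exact: measurable_funB.
apply: (@le_trans _ _ (\int[mu]_(t in `[u, 1%R[)
    ((1 - a)^-1%:E * ((1 - a) * (1 - t) `^ (- a))%:E))%E); last first.
  apply: ge0_le_integral => //.
  - by move=> t _; rewrite -EFinM lee_fin !mulr_ge0 ?powR_ge0 //; lra.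
  - by apply/measurable_EFinP; exact: measurable_funM.
  - by apply/measurable_EFinP; exact: measurable_beta_kernel.
  move=> t; rewrite /= in_itv /= => /andP[ut t1].
  rewrite -EFinM lee_fin /beta_kernel mulrA mulVf ?mul1r; last by rewrite subr_eq0 gt_eqF.
  rewrite ler_peMl ?powR_ge0 // -[X in X <= _](powRr0 t).
  by apply: ger_powR; [apply/andP; split|]; lra.
rewrite ge0_integralZl_EFin //; last 2 first.
- by move=> t _; rewrite lee_fin mulr_ge0 ?powR_ge0 //; lra.
- exact/measurable_EFinP.
rewrite /tail_bound (mulrC _ (1 - a)^-1) (EFinM (1 - a)^-1).
apply: lee_pmul; rewrite ?lee_fin ?powR_ge0 //.
exact: integral_onem_powR_co_ge.
Qed.

Lemma powR_half_gap_le (a r : R) : 1 < 3 * a -> a < 1 -> 0 < r <= 1 ->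
  2 * (1 - a) * (r `^ ((1 - a) / 2) - r `^ a) <= a * (1 - r).
Proof.
move=> a3 a1 /andP[r0 r1].
have a0 : 0 < a by lra.
set Q := r `^ a; set l := (1 - a) / (2 * a).
have l0 : 0 < l by apply: divr_gt0; lra.
have l1 : l < 1 by rewrite /l ltr_pdivrMr; lra.
have -> : r `^ ((1 - a) / 2) = Q `^ l.
  by rewrite /Q -powRrM; congr (_ `^ _); rewrite /l; field; lra.
have young : Q `^ l <= l * Q + (1 - l).
  by apply: powR_le_affine; rewrite ?powR_ge0 ?l0.
have Qr : r <= Q by apply: ger1_powR; [rewrite r0|]; lra.
have gap : Q `^ l - Q <= (1 - l) * (1 - r) by nra.
have hl : 2 * (1 - a) * (1 - l) <= a.
  rewrite -subr_ge0 (_ : a - _ = (2 * a - 1) ^+ 2 / a); last by rewrite /l; field; lra.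
  by rewrite divr_ge0 ?sqr_ge0 ?ltW.
nra.
Qed.

Lemma scaled_head_ratio_le (a q r : R) : 0 < a < 1 -> (1 - 3 * a) / 2 <= q ->
  0 < r < 1 ->
  (r `^ q - 1) * ((2 * r / (1 + r)) `^ a / a)
    <= (1 - 2 * r / (1 + r)) / (1 - a).
Proof.
move=> /andP[a0 a1] hq /andP[r0 r1].
set u := 2 * r / (1 + r).
have onem_u : 1 - u = (1 - r) / (1 + r) by rewrite /u; field; lra.
have rhs0 : 0 <= (1 - u) / (1 - a).
  by rewrite onem_u !divr_ge0 //; lra.
have r01 : 0 < r <= 1 by rewrite r0 ltW.
have [a3|a3] := leP (3 * a) 1.
  apply: le_trans rhs0; apply: mulr_le0_ge0.
    by rewrite subr_le0 -(powRr0 r); apply: ger_powR => //; lra.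
  by apply: divr_ge0; [exact: powR_ge0|exact: ltW].
set c := (3 * a - 1) / 2.
have rq : r `^ q <= r `^ (- c) by apply: ger_powR => //; rewrite /c; lra.
have rc1 : 1 <= r `^ (- c) by rewrite -(powRr0 r); apply: ger_powR => //; rewrite /c; lra.
have ua : u `^ a <= 2 / (1 + r) * r `^ a.
  have h2 : 0 <= 2 / (1 + r) by apply: divr_ge0; lra.
  rewrite /u mulrAC powRM ?(ltW r0) //.
  rewrite ler_wpM2r ?powR_ge0 //; apply: ler1_powR; last lra.
  by rewrite ler_pdivlMr; lra.
have rcQ : r `^ (- c) * r `^ a = r `^ ((1 - a) / 2).
  rewrite -powRD; last by apply/implyP => _; rewrite gt_eqF.
  by congr (_ `^ _); rewrite /c; field.
apply: (@le_trans _ _ ((r `^ (- c) - 1) * (u `^ a / a))).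
  apply: ler_wpM2r; last by rewrite lerD2r.
  by apply: divr_ge0; [exact: powR_ge0|exact: ltW].
apply: (@le_trans _ _ ((r `^ (- c) - 1) * (2 / (1 + r) * r `^ a / a))).
  by rewrite ler_wpM2l ?subr_ge0 // ler_pM2r ?invr_gt0.
have gapE : (1 - u) / (1 - a) - (r `^ (- c) - 1) * (2 / (1 + r) * r `^ a / a) =
    (a * (1 - r) - 2 * (1 - a) * (r `^ ((1 - a) / 2) - r `^ a))
      / (a * (1 - a) * (1 + r)).
  by rewrite -rcQ onem_u; field; lra.
rewrite -subr_ge0 gapE divr_ge0 ?subr_ge0 ?powR_half_gap_le //.
by rewrite !mulr_ge0 //; lra.
Qed.

Lemma scaled_head_le_tail (a q r : R) : 0 < a < 1 -> (1 - 3 * a) / 2 <= q ->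
  0 < r < 1 ->
  (r `^ q - 1) * head_bound a (2 * r / (1 + r))
    <= tail_bound a (2 * r / (1 + r)).
Proof.
move=> a01 hq r01; have /andP[r0 r1] := r01.
set u := 2 * r / (1 + r).
have u1 : u < 1 by rewrite /u ltr_pdivrMr; lra.
have e0 : 0 < (1 - u) `^ (- a) by rewrite powR_gt0 // subr_gt0.
have e1 : (1 - u) `^ (1 - a) = (1 - u) `^ (- a) * (1 - u).
  have u_ge0 : 0 <= 1 - u by rewrite subr_ge0 ltW.
  have u_neq0 : 1 - u != 0 by rewrite gt_eqF // subr_gt0.
  rewrite powRD ?powRr1 1?mulrC //.
  by rewrite u_neq0 implybT.
rewrite /head_bound /tail_bound e1.
rewrite (_ : (r `^ q - 1) * ((1 - u) `^ (- a) / a * u `^ a) =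
  (1 - u) `^ (- a) * ((r `^ q - 1) * (u `^ a / a))); last ring.
rewrite -[(1 - u) `^ (- a) * (1 - u) / (1 - a)]mulrA.
by rewrite ler_pM2l //; exact: scaled_head_ratio_le.
Qed.

Lemma scaled_integral_beta_kernel_le (a q r : R) : 0 < a < 1 ->
  (1 - 3 * a) / 2 <= q -> 0 < r < 1 ->
  ((r `^ q)%:E * \int[mu]_(t in `]0%R, (2 * r / (1 + r))%R[) (beta_kernel a t)%:E
    <= \int[mu]_(t in `]0%R, 1%R[) (beta_kernel a t)%:E)%E.
Proof.
move=> a01 hq r01; have /andP[a0 a1] := a01; have /andP[r0 r1] := r01.
set u := 2 * r / (1 + r).
have u0 : 0 < u by rewrite /u divr_gt0; lra.
have u1 : u < 1 by rewrite /u ltr_pdivrMr; lra.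
have u01 : 0 < u < 1 by rewrite u0 u1.
rewrite (ge0_integral_itv_oo_split u0 (ltW u1) (@measurable_beta_kernel a _)
  (fun t _ => beta_kernel_ge0 a t)).
have tail := tail_le_integral_beta_kernel a1 u01.
have scale := scaled_head_le_tail a01 hq r01.
have B0 : 0 <= tail_bound a u by rewrite divr_ge0 ?powR_ge0 //; lra.
have : (0 <= \int[mu]_(t in `]0%R, u[) (beta_kernel a t)%:E)%E.
  by apply: integral_ge0 => t _; rewrite lee_fin beta_kernel_ge0.
move: (integral_beta_kernel_le_head a0 u01).
case: (\int[mu]_(t in `]0%R, u[) _)%E => [X| |] //; rewrite ?leye_eq //.
rewrite !lee_fin => XA X0.
apply: le_trans (leeD2l X%:E tail); rewrite -EFinM -EFinD lee_fin.
have [rq1|rq1] := leP (r `^ q) 1.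
  by have := ler_piMl X0 rq1; lra.
have : (r `^ q - 1) * X <= (r `^ q - 1) * head_bound a u.
  by rewrite ler_wpM2l // subr_ge0 ltW.
lra.
Qed.

End incomplete_beta.

(* Multiplied by [2 p], the second bound reads [2 p^2 - (9 + 3 alpha) p
   + 3 (alpha + 2) >= 0], and the threshold is the larger root. *)
Lemma threshold_exponents {R : rcfType} (alpha p : R) : 0 <= alpha ->
  (9 + 3 * alpha + Num.sqrt (9 * alpha ^+ 2 + 30 * alpha + 33)) / 4 <= p ->
  alpha + 2 < p /\ (1 - 3 * ((alpha + 2) / p)) / 2 <= p - 4 - 3 * alpha / 2.
Proof.
move=> halpha; set s := Num.sqrt _ => hp.
have D0 : 0 <= 9 * alpha ^+ 2 + 30 * alpha + 33 by have := sqr_ge0 alpha; lra.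
have s0 : 0 <= s := sqrtr_ge0 _.
have ss : s * s = 9 * alpha ^+ 2 + 30 * alpha + 33 by rewrite -expr2 sqr_sqrtr.
rewrite expr2 in ss.
have s35 : 3 * alpha + 5 <= s by nra.
have p_gt : alpha + 2 < p by lra.
split=> //.
have root : 0 <= 2 * (p * p) - (9 + 3 * alpha) * p + 3 * (2 + alpha).
  have : s <= 4 * p - 9 - 3 * alpha by lra.
  nra.
rewrite (_ : (1 - 3 * ((alpha + 2) / p)) / 2 = (p - 3 * (alpha + 2)) / (2 * p));
  last by field; lra.
rewrite ler_pdivrMr; nra.
Qed.

Theorem mainTheorem5 (R : realType) (alpha p : R) (halpha : 0 <= alpha)
  (hp : (9 + 3 * alpha + Num.sqrt (9 * alpha ^+ 2 + 30 * alpha + 33)) / 4 <= p) :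
  alpha + 2 < p /\
  (forall r : R, 0 < r -> r <= 1 -> (Fpa p alpha r <= 0)%E).
Proof.
have [p_gt q_ge] := threshold_exponents halpha hp.
split=> // r r0 r1; rewrite /Fpa sube_le0 !Ikern_beta_kernel.
move: r1; rewrite le_eqVlt => /orP[/eqP->|r1].
  rewrite (_ : 2 * 1 / (1 + 1) = 1 :> R); last by field.
  by rewrite powR1 mul1e.
have a01 : 0 < (alpha + 2) / p < 1.
  by apply/andP; split; [apply: divr_gt0|rewrite ltr_pdivrMr]; lra.
by apply: scaled_integral_beta_kernel_le => //; rewrite r0 r1.
Qed.
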